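(* Let $(X,\to,d_A)$ be a metric transition system over $A$ (of arbitrary branching type), and let $d\in\mathit{DPMet}(\mathcal P(X))$ be join-preserving in its first argument and satisfy $d(X_1,\emptyset)=1$ for every nonempty $X_1\subseteq X$. Then $\beta_T(d)(X_1,\emptyset)=1$ for $X_1\neq\emptyset$, and otherwise \[\beta_T(d)(X_1,X_2)=\bigvee_{(a,x')\in\delta[X_1]}\ \bigvee_{\Delta\subseteq\delta[X_2]}\Big(\bigwedge_{b\in\mathrm{lab}(\Delta)}d_A(a,b)\ \land\ d(\{x'\},\mathrm{ter}(\delta[X_2]\setminus\Delta))\Big).\] Moreover $\beta_T$ is continuous, independent of the branching type of the transition system.
   Context: A metric transition system over $A$ is $(X,\to,d_A)$ with $\to\subseteq X\times A\times X$ and a metric $d_A\colon A\times A\to[0,1]$. $\delta(x)=\{(a,x')\mid x\xrightarrow{a}x'\}$, $\delta[Y]=\bigcup_{y\in Y}\delta(y)$; for $\Delta\subseteq A\times X$, $\mathrm{lab}(\Delta)$ and $\mathrm{ter}(\Delta)$ are the projections to the first and second components. On $[0,1]$: $r\oplus s=\min\{r+s,1\}$, $r\ominus s=\max\{0,r-s\}$; $\bigvee\emptyset=0$, $\bigwedge\emptyset=1$. A directed pseudo-metric on $Y$ is $d\colon Y\times Y\to[0,1]$ with $d(y,y)=0$ and $d(x,z)\le d(x,y)\oplus d(y,z)$; $\mathit{DPMet}(Y)$ is the set of these, ordered pointwise by $\le$. $d$ on $\mathcal P(X)$ is join-preserving in its first argument if $d(\bigcup_iX_i,Y)=\bigvee_id(X_i,Y)$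 for all families. For $f\colon X\to[0,1]$, $\tilde f(Y)=\bigvee_{x\in Y}f(x)$. Modality: $\bigcirc_a f(x)=\bigvee\{(1-d_A(b,a))\land f(x')\mid x\xrightarrow{b}x'\}$. $\alpha_T(\mathcal F)(X_1,X_2)=\bigvee_{f\in\mathcal F}(\tilde f(X_1)\ominus\tilde f(X_2))$; $\gamma_T(d)=\{f\in[0,1]^X\mid\forall X_1,X_2\colon\tilde f(X_1)\ominus\tilde f(X_2)\le d(X_1,X_2)\}$; $\mathit{lo}_T(\mathcal F)=\bigcup_{a\in A}\{\bigcirc_af\mid f\in\mathrm{cl}^{\mathrm{sh}}(\mathcal F)\}\cup\{1\}$, where $\mathrm{cl}^{\mathrm{sh}}(\mathcal F)$ is the closure of $\mathcal F$ under the constant shifts $f\mapsto f\ominus c$, $f\mapsto f\oplus c$ ($c\in[0,1]$) and $1$ is the constant function; $\beta_T=\alpha_T\circ\mathit{lo}_T\circ\gamma_T\colon\mathit{DPMet}(\mathcal P(X))\to\mathit{DPMet}(\mathcal P(X))$. Continuous means preserving suprema of well-ordered chains. *)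

From HB Require Import structures.
From mathcomp Require Import all_boot all_order all_algebra.
From mathcomp Require Import classical_sets boolp reals.
Set Implicit Arguments. Unset Strict Implicit. Unset Printing Implicit Defensive.
Import Order.TTheory GRing.Theory Num.Theory.
Local Open Scope classical_set_scope.
Local Open Scope ring_scope.

Section Defs.
Variable R : realType.

(* \bigvee : sup of a set of reals; sup set0 = 0 in MathComp-Analysis (lemma sup0) *)
Definition vsup (S : set R) : R := sup S.
Definition vinf (S : set R) : R := if pselect (S = set0) then 1 else inf S.
Definition oplus (r s : R) : R := Num.min (r + s) 1.
Definition ominus (r s : R) : R := Num.max 0 (r - s).

Variables (X A : Type).

Definition is_metric01 (dA : A -> A -> R) : Prop :=
  (forall a b, 0 <= dA a b <= 1) /\
  (forall a b, dA a b = 0 <-> a = b) /\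
  (forall a b, dA a b = dA b a) /\
  (forall a b c, dA a c <= dA a b + dA b c).

Definition is_dpmet (Y : Type) (d : Y -> Y -> R) : Prop :=
  (forall x y, 0 <= d x y <= 1) /\
  (forall y, d y y = 0) /\
  (forall x y z, d x z <= oplus (d x y) (d y z)).

Definition join_pres1 (d : set X -> set X -> R) : Prop :=
  forall (I : Type) (Xs : I -> set X) (Y : set X),
    d (\bigcup_(i in setT) Xs i) Y = vsup [set d (Xs i) Y | i in setT].

Variable trans : X -> A -> X -> Prop.  (* x --a--> x' *)
Variable dA : A -> A -> R.

Definition delta (x : X) : set (A * X) := [set p | trans x p.1 p.2].
Definition deltaS (Y : set X) : set (A * X) := [set p | exists2 y, Y y & trans y p.1 p.2].
Definition lab (D : set (A * X)) : set A := [set p.1 | p in D].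
Definition ter (D : set (A * X)) : set X := [set p.2 | p in D].

Definition tilde (f : X -> R) (Y : set X) : R := vsup [set f x | x in Y].

Definition modality (a : A) (f : X -> R) (x : X) : R :=
  vsup [set Num.min (1 - dA p.1 a) (f p.2) | p in delta x].

Definition alphaT (F : set (X -> R)) (X1 X2 : set X) : R :=
  vsup [set ominus (tilde f X1) (tilde f X2) | f in F].

Definition gammaT (d : set X -> set X -> R) : set (X -> R) :=
  [set f | (forall x, 0 <= f x <= 1) /\
           forall X1 X2, ominus (tilde f X1) (tilde f X2) <= d X1 X2].

Inductive clsh (F : set (X -> R)) : (X -> R) -> Prop :=
| clsh_base f : F f -> clsh F f
| clsh_sub f c : clsh F f -> 0 <= c <= 1 -> clsh F (fun x => ominus (f x) c)
| clsh_add f c : clsh F f -> 0 <= c <= 1 -> clsh F (fun x => oplus (f x) c).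

Definition loT (F : set (X -> R)) : set (X -> R) :=
  [set g | exists a f, clsh F f /\ g = modality a f] `|` [set (fun _ => 1)].

Definition betaT (d : set X -> set X -> R) : set X -> set X -> R :=
  alphaT (loT (gammaT d)).

Definition dle (d1 d2 : set X -> set X -> R) : Prop := forall X1 X2, d1 X1 X2 <= d2 X1 X2.

Definition well_ordered_chain (D : set (set X -> set X -> R)) : Prop :=
  (forall d1 d2, D d1 -> D d2 -> dle d1 d2 \/ dle d2 d1) /\
  (forall S, S `<=` D -> S !=set0 -> exists2 m, S m & forall s, S s -> dle m s).

Definition dsup (D : set (set X -> set X -> R)) : set X -> set X -> R :=
  fun X1 X2 => vsup [set d X1 X2 | d in D].

End Defs.

(* Each inequality is realised by an explicit test function.  Every function in
   [clsh (gammaT d)] satisfies [f x <= d {x} Y + t] whenever [t >= 0] bounds [f] on [Y]: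
   the shifts preserve this because [d Y empty = 1].  So for [g = modality a f] and
   [s = tilde g X2], the transitions out of [X2] whose label lies within [1 - s] of [a]
   form a set [Del] for which each successor of [X1] contributes at most [s] plus the
   formula's term.  Conversely, given [p] and [Del], the distance to
   [ter (deltaS X2 \ Del)], shifted up and put under the modality at [p.1], takes the value
   [1] on [X1] and at most [1 - r] on [X2], [r] being the term of [p] and [Del].  The
   closed formula commutes with suprema in [d], which gives continuity. *)

From HB Require Import structures.
From mathcomp Require Import all_boot all_order all_algebra.
From mathcomp Require Import classical_sets boolp reals.
From mathcomp Require Import lra.
Import Order.TTheory GRing.Theory Num.Theory.
Local Open Scope classical_set_scope.
Local Open Scope ring_scope.
Set Implicit Arguments. Unset Strict Implicit. Unset Printing Implicit Defensive.

Section SupInf.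
Variable R : realType.
Implicit Types (S : set R) (c x : R).

Lemma le_vsup S c x : (forall y, S y -> y <= c) -> S x -> x <= vsup S.
Proof. by move=> Sc Sx; apply: ub_le_sup => //; exists c. Qed.

Lemma ge_vsup S c : (forall y, S y -> y <= c) -> 0 <= c -> vsup S <= c.
Proof.
move=> Sc c0; have [->|/set0P S0] := eqVneq S set0; first by rewrite /vsup sup0.
exact: ge_sup.
Qed.

Lemma vsup_in01 S : (forall y, S y -> 0 <= y <= 1) -> 0 <= vsup S <= 1.
Proof.
move=> S01; apply/andP; split; last by apply: ge_vsup => // y /S01 /andP[].
have [->|/set0P [x Sx]] := eqVneq S set0; first by rewrite /vsup sup0.
have /andP[x0 _] := S01 x Sx.
by apply: le_trans x0 (le_vsup (c := 1) _ Sx) => y /S01 /andP[].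
Qed.

Lemma vinf0 : vinf (@set0 R) = 1.
Proof. by rewrite /vinf; case: pselect. Qed.

Lemma vinfE S : S !=set0 -> vinf S = inf S.
Proof. by move=> /set0P/eqP S0; rewrite /vinf; case: pselect. Qed.

Lemma ge_vinf S x : (forall y, S y -> 0 <= y) -> S x -> vinf S <= x.
Proof. by move=> S0 Sx; rewrite vinfE; [apply: ge_inf => //; exists 0 | exists x]. Qed.

Lemma le_vinf S c : (forall y, S y -> c <= y) -> c <= 1 -> c <= vinf S.
Proof.
move=> Sc c1; have [->|/set0P S0] := eqVneq S set0; first by rewrite vinf0.
by rewrite vinfE //; apply: lb_le_inf.
Qed.

Lemma vinf_in01 S : (forall y, S y -> 0 <= y <= 1) -> 0 <= vinf S <= 1.
Proof.
move=> S01; rewrite le_vinf ?ler01 //=; last by move=> y /S01 /andP[].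
have [->|/set0P [x Sx]] := eqVneq S set0; first by rewrite vinf0.
have /andP[_ x1] := S01 x Sx.
by apply: le_trans (ge_vinf _ Sx) x1 => y /S01 /andP[].
Qed.

Lemma min_vsup_le S c x : 0 <= x -> (forall y, S y -> Num.min c y <= x) ->
  Num.min c (vsup S) <= x.
Proof.
move=> x0 Sx; have [cx|xc] := lerP c x; first by rewrite ge_min cx.
rewrite ge_min ge_vsup ?orbT // => y /Sx.
by rewrite ge_min => /orP[/(lt_le_trans xc)|//]; rewrite ltxx.
Qed.

End SupInf.

Section Tilde.
Variables (R : realType) (X : Type).
Implicit Types (f : X -> R) (Y : set X) (d : set X -> set X -> R).

Definition valued01 f := forall x, 0 <= f x <= 1.

Lemma le_tilde f Y c x : (forall y, Y y -> f y <= c) -> Y x -> f x <= tilde f Y.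
Proof. by move=> Yc Yx; apply: (le_vsup (c := c)) => [_ [y Yy <-]|]; [exact: Yc | exists x]. Qed.

Lemma ge_tilde f Y c : (forall y, Y y -> f y <= c) -> 0 <= c -> tilde f Y <= c.
Proof. by move=> Yc; apply: ge_vsup => _ [y Yy <-]; exact: Yc. Qed.

Lemma tilde_in01 f Y : valued01 f -> 0 <= tilde f Y <= 1.
Proof. by move=> f01; apply: vsup_in01 => _ [y _ <-]. Qed.

Lemma tilde0 f : tilde f set0 = 0.
Proof. by rewrite /tilde image_set0 /vsup sup0. Qed.

Lemma tilde1 f x : tilde f [set x] = f x.
Proof. by rewrite /tilde image_set1 /vsup sup1. Qed.

Lemma join_pres1_tilde d : join_pres1 d -> forall Y Z, d Y Z = tilde (fun y => d [set y] Z) Y.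
Proof.
move=> dj Y Z; rewrite /tilde.
have <- : \bigcup_(i in @setT {y | Y y}) [set sval i] = Y.
  apply/seteqP; split => [y [[z Yz] _ ->]|y Yy] //.
  by exists (exist _ y Yy).
rewrite dj; congr vsup; apply/seteqP; split => [_ [i _ <-]|_ [y [i _ ->] <-]].
  by exists (sval i) => //; exists i.
by exists i.
Qed.

End Tilde.

Section ShiftClosure.
Variables (R : realType) (X : Type).
Implicit Types (f : X -> R) (F : set (X -> R)) (d : set X -> set X -> R).

(* The singleton case of the condition defining [gammaT d], with [tilde f Y] relaxed
   to any upper bound [t] of [f] on [Y]; unlike that condition, it survives shifts. *)
Definition point_lipschitz d f :=
  forall x Y t, 0 <= t -> (forall y, Y y -> f y <= t) -> f x <= d [set x] Y + t.

Lemma clsh_valued01 F f : (forall g, F g -> valued01 g) -> clsh F f -> valued01 f.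
Proof.
move=> F01; elim=> {f} [f /F01 //|f c _ f01 /andP[c0 c1]|f c _ f01 /andP[c0 c1]] x;
  have /andP[? ?] := f01 x.
- by rewrite /ominus le_max ge_max lexx /=; apply/andP; split => //; lra.
- by rewrite /oplus le_min ge_min lexx orbT andbT; lra.
Qed.

Lemma gamma_point_lipschitz d f : gammaT d f -> point_lipschitz d f.
Proof.
move=> [_ fd] x Y t t0 Yt; have := fd [set x] Y.
rewrite tilde1 /ominus ge_max => /andP[_]; have := ge_tilde Yt t0; lra.
Qed.

Lemma clsh_point_lipschitz F d f :
  (forall U V, 0 <= d U V) -> (forall Y, Y !=set0 -> d Y set0 = 1) ->
  (forall g, F g -> valued01 g) -> (forall g, F g -> point_lipschitz d g) ->
  clsh F f -> point_lipschitz d f.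
Proof.
move=> d_ge0 d_empty F01 F_lip; elim=> {f} [f /F_lip //|f c _ fl /andP[c0 c1]|f c fF fl /andP[c0 c1]]
  x Y t t0 Yt; have dx0 := d_ge0 [set x] Y.
- have Yt' y : Y y -> f y <= t + c by move/Yt; rewrite /ominus ge_max => /andP[_]; lra.
  have := fl x Y (t + c) ltac:(lra) Yt'.
  by rewrite /ominus ge_max => ?; apply/andP; split; lra.
- rewrite /oplus ge_min; have [->|/set0P [y0 Yy0]] := eqVneq Y set0.
    by rewrite d_empty; [apply/orP; right; lra | exists x].
  have [t1|t1] := lerP 1 t; first by apply/orP; right; lra.
  have Yt' y : Y y -> f y <= t - c.
    by move/Yt; rewrite /oplus ge_min => /orP[]; lra.
  have /andP[fy0 _] := clsh_valued01 F01 fF y0.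
  have fy0t := Yt' y0 Yy0.
  by have := fl x Y (t - c) ltac:(lra) Yt' => ?; apply/orP; left; lra.
Qed.

End ShiftClosure.

Section PointwiseSup.
Variables (R : realType) (X : Type).
Implicit Types (d : set X -> set X -> R) (D : set (set X -> set X -> R)).

Definition dist01 d := forall U V, 0 <= d U V <= 1.

Lemma le_dsup D d U V : (forall e, D e -> dist01 e) -> D d -> d U V <= dsup D U V.
Proof.
move=> D01 Dd; apply: (le_vsup (c := 1)) => [_ [e De <-]|]; last by exists d.
by case/andP: (D01 e De U V).
Qed.

Lemma dsup_dist01 D : (forall e, D e -> dist01 e) -> dist01 (dsup D).
Proof. by move=> D01 U V; apply: vsup_in01 => _ [e De <-]; exact: D01. Qed.

Lemma dsup_imageE (T : Type) (F : T -> set X -> set X -> R) (I : set T) U V :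
  dsup [set F i | i in I] U V = vsup [set F i U V | i in I].
Proof.
congr vsup; apply/seteqP; split => [_ [_ [i Ii <-] <-]|_ [i Ii <-]]; first by exists i.
by exists (F i) => //; exists i.
Qed.

Lemma dsup_dpmet D : (forall d, D d -> is_dpmet d) -> is_dpmet (dsup D).
Proof.
move=> Dd; have D01 e : D e -> dist01 e by move/Dd => [].
split; first exact: dsup_dist01.
split=> [y|x y z].
  apply/le_anti; rewrite (andP (dsup_dist01 D01 y y)).1 andbT.
  by apply: ge_vsup => // _ [e /Dd[_ [-> _]] <-].
have /andP[xy0 _] := dsup_dist01 D01 x y; have /andP[yz0 _] := dsup_dist01 D01 y z.
apply: ge_vsup => [_ [e De <-]|]; last by rewrite le_min ler01 andbT; lra.
have [/(_ x z) /andP[_ ?] [_ /(_ x y z)]] := Dd e De.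
have := le_dsup x y D01 De; have := le_dsup y z D01 De.
by rewrite /oplus !le_min => ? ? /andP[? ?]; apply/andP; split; lra.
Qed.

Lemma dsup_join_pres1 D : (forall d, D d -> dist01 d /\ join_pres1 d) -> join_pres1 (dsup D).
Proof.
move=> Dd I Xs Y; have D01 e : D e -> dist01 e by move/Dd => [].
have /andP[lhs0 _] := dsup_dist01 D01 (\bigcup_(i in setT) Xs i) Y.
have /andP[rhs0 _] : 0 <= vsup [set dsup D (Xs i) Y | i in setT] <= 1.
  by apply: vsup_in01 => _ [i _ <-]; exact: dsup_dist01.
apply/le_anti/andP; split.
  apply: ge_vsup => // _ [e De <-]; have [_ ->] := Dd e De.
  apply: ge_vsup => // _ [i _ <-]; apply: le_trans (le_dsup _ _ D01 De) _.
  by apply: (le_vsup (c := 1)) => [_ [j _ <-]|]; [case/andP: (dsup_dist01 D01 (Xs j) Y) | exists i].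
apply: ge_vsup => // _ [i _ <-]; apply: ge_vsup => // _ [e De <-].
apply: le_trans (le_dsup _ _ D01 De); have [_ ->] := Dd e De.
by apply: (le_vsup (c := 1)) => [_ [j _ <-]|]; [case/andP: (D01 e De (Xs j) Y) | exists i].
Qed.

Lemma dsup_nonempty_empty D : D !=set0 ->
  (forall d, D d -> forall U, U !=set0 -> d U set0 = 1) ->
  forall U, U !=set0 -> dsup D U set0 = 1.
Proof.
move=> [d Dd] D1 U U0; apply/le_anti/andP; split.
  by apply: ge_vsup => // _ [e De <-]; rewrite D1.
by apply: (le_vsup (c := 1)) => [_ [e De <-]|]; [rewrite D1 | exists d; rewrite ?D1].
Qed.

End PointwiseSup.

Section Beta.
Variables (R : realType) (X A : Type) (trans : X -> A -> X -> Prop) (dA : A -> A -> R).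
Hypothesis dA_metric : is_metric01 dA.
Implicit Types (f g : X -> R) (d : set X -> set X -> R).

Let dA01 a b : 0 <= dA a b <= 1. Proof. exact: dA_metric.1. Qed.
Let dAxx a : dA a a = 0. Proof. exact/dA_metric.2.1. Qed.
Let dAC a b : dA a b = dA b a. Proof. exact: dA_metric.2.2.1. Qed.
Let dA_triangle a b c : dA a c <= dA a b + dA b c. Proof. exact: dA_metric.2.2.2. Qed.

Lemma modality_valued01 a f : valued01 f -> valued01 (modality trans dA a f).
Proof.
move=> f01 x; apply: vsup_in01 => _ [p _ <-].
have /andP[? ?] := f01 p.2; have /andP[? ?] := dA01 p.1 a.
by rewrite le_min ge_min; apply/andP; split; [apply/andP; split; lra | apply/orP; right].
Qed.

Lemma le_modality a f x q : valued01 f -> delta trans x q ->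
  Num.min (1 - dA q.1 a) (f q.2) <= modality trans dA a f x.
Proof.
move=> f01 xq; apply: (le_vsup (c := 1)) => [_ [p _ <-]|]; last by exists q.
by rewrite ge_min (andP (f01 p.2)).2 orbT.
Qed.

Lemma loT_valued01 F g : (forall f, F f -> valued01 f) -> loT trans dA F g -> valued01 g.
Proof.
move=> F01 [[a [f [Ff ->]]]|->]; last by move=> x; rewrite lexx ler01.
exact/modality_valued01/(clsh_valued01 F01).
Qed.

Lemma ominus_tilde_in01 g X1 X2 : valued01 g -> 0 <= ominus (tilde g X1) (tilde g X2) <= 1.
Proof.
move=> g01; have /andP[? ?] := tilde_in01 X1 g01; have /andP[? ?] := tilde_in01 X2 g01.
by rewrite /ominus le_max ge_max lexx /=; apply/andP; split => //; lra.
Qed.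

Let gamma_valued01 d f : gammaT d f -> valued01 f. Proof. by case. Qed.

Lemma le_betaT d g X1 X2 : loT trans dA (gammaT d) g ->
  ominus (tilde g X1) (tilde g X2) <= betaT trans dA d X1 X2.
Proof.
move=> g_lo; apply: (le_vsup (c := 1)) => [_ [h h_lo <-]|]; last by exists g.
by case/andP: (ominus_tilde_in01 X1 X2 (loT_valued01 (@gamma_valued01 d) h_lo)).
Qed.

Lemma ge_betaT d X1 X2 c :
  (forall g, loT trans dA (gammaT d) g -> ominus (tilde g X1) (tilde g X2) <= c) ->
  0 <= c -> betaT trans dA d X1 X2 <= c.
Proof. by move=> gc; apply: ge_vsup => _ [g g_lo <-]; exact: gc. Qed.

Lemma betaT_in01 d X1 X2 : 0 <= betaT trans dA d X1 X2 <= 1.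
Proof.
apply: vsup_in01 => _ [g g_lo <-].
exact/ominus_tilde_in01/(loT_valued01 (@gamma_valued01 d) g_lo).
Qed.

(* Witnessed by the constant [1], which belongs to every [loT F]. *)
Lemma betaT_nonempty_empty d X1 : X1 !=set0 -> betaT trans dA d X1 set0 = 1.
Proof.
move=> [x X1x]; apply/le_anti; rewrite (andP (betaT_in01 d X1 set0)).2 /=.
apply: le_trans (le_betaT X1 set0 (_ : loT trans dA (gammaT d) (fun=> 1))); last by right.
rewrite tilde0 /ominus subr0 le_max; apply/orP; right.
by apply: (le_tilde (c := 1)) X1x => y _.
Qed.

Definition beta_term d X2 (p : A * X) (Del : set (A * X)) : R :=
  Num.min (vinf [set dA p.1 b | b in lab Del]) (d [set p.2] (ter (deltaS trans X2 `\` Del))).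

Definition beta_formula d X1 X2 : R :=
  vsup [set vsup [set beta_term d X2 p Del | Del in [set Del | Del `<=` deltaS trans X2]]
       | p in deltaS trans X1].

Lemma beta_term_in01 d X2 p Del : dist01 d -> 0 <= beta_term d X2 p Del <= 1.
Proof.
move=> d01; have /andP[? ?] := d01 [set p.2] (ter (deltaS trans X2 `\` Del)).
have /andP[? ?] : 0 <= vinf [set dA p.1 b | b in lab Del] <= 1.
  by apply: vinf_in01 => _ [b _ <-].
by rewrite le_min ge_min; apply/andP; split; [apply/andP; split | apply/orP; left].
Qed.

Lemma beta_formula_in01 d X1 X2 : dist01 d -> 0 <= beta_formula d X1 X2 <= 1.
Proof.
move=> d01; apply: vsup_in01 => _ [p _ <-].
by apply: vsup_in01 => _ [Del _ <-]; exact: beta_term_in01.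
Qed.

Lemma le_beta_formula d X1 X2 p Del : dist01 d ->
  deltaS trans X1 p -> Del `<=` deltaS trans X2 -> beta_term d X2 p Del <= beta_formula d X1 X2.
Proof.
move=> d01 X1p DelX2.
have inner01 q : 0 <= vsup [set beta_term d X2 q E | E in [set E | E `<=` deltaS trans X2]] <= 1.
  by apply: vsup_in01 => _ [E _ <-]; exact: beta_term_in01.
apply: (le_trans (y := vsup [set beta_term d X2 p E | E in [set E | E `<=` deltaS trans X2]])).
  apply: (le_vsup (c := 1)) => [_ [E _ <-]|]; last by exists Del.
  by case/andP: (beta_term_in01 X2 p E d01).
apply: (le_vsup (c := 1)) => [_ [q _ <-]|]; last by exists p.
by case/andP: (inner01 q).
Qed.

Lemma ge_beta_formula d X1 X2 c :
  (forall p Del, deltaS trans X1 p -> Del `<=` deltaS trans X2 -> beta_term d X2 p Del <= c) ->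
  0 <= c -> beta_formula d X1 X2 <= c.
Proof.
move=> Hc c0; apply: ge_vsup => // _ [p X1p <-].
by apply: ge_vsup => // _ [Del DelX2 <-]; exact: Hc.
Qed.

(* The witness [Del] collects the transitions out of [X2] whose label is close enough to
   [a] for them to contribute at least [1 - s] to the modality. *)
Lemma modality_le_beta_term d a f X2 p s : valued01 f -> point_lipschitz d f -> 0 <= s ->
  (forall y, X2 y -> modality trans dA a f y <= s) ->
  Num.min (1 - dA p.1 a) (f p.2)
    <= beta_term d X2 p [set q | deltaS trans X2 q /\ 1 - dA q.1 a <= s] + s.
Proof.
move=> f01 f_lip s0 X2s; set Del := [set q | _ /\ _].
set m := Num.min _ _; have m_dA : m <= 1 - dA p.1 a by rewrite ge_min lexx.
have m_f : m <= f p.2 by rewrite ge_min lexx orbT.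
have m_le1 : m <= 1 by apply: le_trans m_f _; case/andP: (f01 p.2).
have f_ter y : ter (deltaS trans X2 `\` Del) y -> f y <= s.
  move=> [q [[x X2x xq] Del'q] <-]; have := le_trans (le_modality a f01 xq) (X2s x X2x).
  by rewrite ge_min => /orP[q_close|//]; exfalso; apply: Del'q; split => //; exists x.
suff : m - s <= beta_term d X2 p Del by lra.
rewrite le_min; apply/andP; split; last by have := f_lip p.2 _ s s0 f_ter; lra.
apply: le_vinf => [_ [_ [q [_ q_close] <-] <-]|]; last by lra.
by have := dA_triangle q.1 p.1 a; rewrite (dAC q.1 p.1); lra.
Qed.

Lemma betaT_le_beta_formula d X1 X2 : is_dpmet d -> (forall U, U !=set0 -> d U set0 = 1) ->
  X1 = set0 \/ X2 !=set0 -> betaT trans dA d X1 X2 <= beta_formula d X1 X2.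
Proof.
move=> [d01 _] d_empty X12.
have /andP[P0 _] := beta_formula_in01 X1 X2 d01.
apply: ge_betaT => // _ [[a [f [f_sh ->]]]|->].
  have f01 := clsh_valued01 (@gamma_valued01 d) f_sh.
  have f_lip := clsh_point_lipschitz (fun U V => (andP (d01 U V)).1) d_empty
    (@gamma_valued01 d) (@gamma_point_lipschitz _ _ d) f_sh.
  set g := modality trans dA a f; have g01 := modality_valued01 a f01.
  have /andP[s0 _] := tilde_in01 X2 g01.
  suff : tilde g X1 <= beta_formula d X1 X2 + tilde g X2 by rewrite /ominus ge_max P0 /=; lra.
  apply: ge_tilde => [x X1x|]; last by lra.
  apply: ge_vsup => [_ [p xp <-]|]; last by lra.
  apply: le_trans (modality_le_beta_term p f01 f_lip s0 _) _.
    by move=> y X2y; apply: (le_tilde (c := 1)) X2y => z _; case/andP: (g01 z).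
  by rewrite lerD2r; apply: le_beta_formula => // [|q []//]; exists x.
have one01 : valued01 (fun _ : X => 1 : R) by move=> x; rewrite lexx ler01.
rewrite /ominus ge_max P0 /=; have /andP[? ?] := tilde_in01 X2 one01.
case: X12 => [X10|[y X2y]]; first by rewrite {1}X10 tilde0; lra.
suff : 1 <= tilde (fun _ : X => 1 : R) X2 by have /andP[? ?] := tilde_in01 X1 one01; lra.
by apply: (le_tilde (c := 1)) X2y => z _.
Qed.

Lemma dist_to_set_gamma d T : is_dpmet d -> join_pres1 d -> gammaT d (fun y => d [set y] T).
Proof.
move=> [d01 [_ d_triangle]] dj; split=> [y|Y1 Y2]; first exact: d01.
rewrite -!join_pres1_tilde //; have := d_triangle Y1 Y2 T; have /andP[? ?] := d01 Y1 Y2.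
by rewrite /oplus /ominus le_min ge_max => /andP[? ?]; apply/andP; split => //; lra.
Qed.

Lemma dist_to_set_mem d T y : is_dpmet d -> join_pres1 d -> T y -> d [set y] T = 0.
Proof.
move=> [d01 [d_refl _]] dj Ty; apply/le_anti; rewrite (andP (d01 _ _)).1 andbT -(d_refl T).
by rewrite [leRHS](join_pres1_tilde dj); apply: (le_tilde (c := 1)) Ty => z _; case/andP: (d01 [set z] T).
Qed.

(* The witness is the modality at [p.1] of the distance to [T], shifted up by [1 - r]:
   it takes the value [1] at [p.2] and at most [1 - r] on every successor of [X2]. *)
Lemma beta_term_le_betaT d X1 X2 p Del : is_dpmet d -> join_pres1 d ->
  deltaS trans X1 p -> beta_term d X2 p Del <= betaT trans dA d X1 X2.
Proof.
move=> d_met dj [x X1x xp]; have d01 : dist01 d by case: d_met.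
have /andP[r0 r1] := beta_term_in01 X2 p Del d01.
set T := ter (deltaS trans X2 `\` Del); set r := beta_term d X2 p Del in r0 r1 *.
pose h y := oplus (d [set y] T) (1 - r).
have h_sh : clsh (gammaT d) h.
  by apply: clsh_add; [exact/clsh_base/dist_to_set_gamma | apply/andP; split; lra].
have h01 := clsh_valued01 (@gamma_valued01 d) h_sh.
pose g := modality trans dA p.1 h; have g01 := modality_valued01 p.1 h01.
have g_X1 : 1 <= tilde g X1.
  apply: le_trans (le_tilde (c := 1) _ X1x); last by move=> y _; case/andP: (g01 y).
  apply: le_trans (le_modality p.1 h01 xp); rewrite dAxx subr0 le_min lexx /=.
  have : r <= d [set p.2] T by rewrite ge_min lexx orbT.
  by rewrite /h /oplus le_min lexx andbT; lra.
have g_X2 : tilde g X2 <= 1 - r.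
  apply: ge_tilde => [y X2y|]; last by lra.
  apply: ge_vsup => [_ [q yq <-]|]; last by lra.
  have [Del_q|Del'q] := pselect (Del q).
    suff r_le : r <= dA p.1 q.1 by rewrite ge_min (dAC q.1); apply/orP; left; lra.
    apply: (le_trans (y := vinf [set dA p.1 b | b in lab Del])); first by rewrite /r ge_min lexx.
    by apply: ge_vinf => [_ [b _ <-]|]; [case/andP: (dA01 p.1 b) | exists q.1 => //; exists q].
  rewrite ge_min /h (dist_to_set_mem d_met dj (_ : T q.2)); last by exists q => //; split => //; exists y.
  by rewrite /oplus add0r ge_min lexx !orbT.
apply: le_trans (le_betaT X1 X2 (_ : loT trans dA (gammaT d) g)); last by left; exists p.1, h.
by rewrite /ominus le_max; apply/orP; right; lra.
Qed.

Lemma betaT_beta_formula d X1 X2 : is_dpmet d -> join_pres1 d ->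
  (forall U, U !=set0 -> d U set0 = 1) -> X1 = set0 \/ X2 !=set0 ->
  betaT trans dA d X1 X2 = beta_formula d X1 X2.
Proof.
move=> d_met dj d_empty X12; apply/le_anti.
rewrite betaT_le_beta_formula //=; apply: ge_beta_formula => [p Del X1p _|].
  exact: beta_term_le_betaT.
by case/andP: (betaT_in01 d X1 X2).
Qed.

End Beta.

Section Continuity.
Variables (R : realType) (X A : Type) (trans : X -> A -> X -> Prop) (dA : A -> A -> R).
Hypothesis dA_metric : is_metric01 dA.
Implicit Types (D : set (set X -> set X -> R)).

Lemma beta_formula_dsup D X1 X2 : (forall d, D d -> dist01 d) ->
  beta_formula trans dA (dsup D) X1 X2 = vsup [set beta_formula trans dA d X1 X2 | d in D].
Proof.
move=> D01; have /andP[M0 _] : 0 <= vsup [set beta_formula trans dA d X1 X2 | d in D] <= 1.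
  by apply: vsup_in01 => _ [d Dd <-]; exact: (beta_formula_in01 trans dA_metric X1 X2 (D01 d Dd)).
have dsup01 := dsup_dist01 D01.
have /andP[F0 _] := beta_formula_in01 trans dA_metric X1 X2 dsup01.
apply/le_anti/andP; split.
  apply: ge_beta_formula => // p Del X1p DelX2; apply: min_vsup_le => // _ [d Dd <-].
  apply: le_trans (le_beta_formula dA_metric (D01 d Dd) X1p DelX2) _.
  apply: (le_vsup (c := 1)) => [_ [e De <-]|]; last by exists d.
  by case/andP: (beta_formula_in01 trans dA_metric X1 X2 (D01 e De)).
apply: ge_vsup => // _ [d Dd <-]; apply: ge_beta_formula => // p Del X1p DelX2.
apply: le_trans (le_beta_formula dA_metric dsup01 X1p DelX2).
by rewrite le_min ge_min lexx ge_min (le_dsup _ _ D01 Dd) !orbT.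
Qed.

Lemma betaT_dsup D : D !=set0 ->
  (forall d, D d -> [/\ is_dpmet d, join_pres1 d & forall U, U !=set0 -> d U set0 = 1]) ->
  betaT trans dA (dsup D) = dsup [set betaT trans dA d | d in D].
Proof.
move=> [d0 Dd0] Dd; have D01 d : D d -> dist01 d by case/Dd => -[].
have dsup_met : is_dpmet (dsup D) by apply: dsup_dpmet => d /Dd[].
have dsup_join : join_pres1 (dsup D).
  by apply: dsup_join_pres1 => d Dd'; have [_ ? _] := Dd d Dd'; split => //; exact: D01.
have dsup_empty : forall U, U !=set0 -> dsup D U set0 = 1.
  by apply: dsup_nonempty_empty => [|d /Dd[]//]; exists d0.
apply/funext => X1; apply/funext => X2; rewrite dsup_imageE.
have [X12|not_X12] := pselect (X1 = set0 \/ X2 !=set0).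
  rewrite (betaT_beta_formula trans dA_metric) // beta_formula_dsup //; congr vsup.
  by apply: eq_imagel => d /Dd[? ? ?]; rewrite (betaT_beta_formula trans dA_metric).
have X10 : X1 !=set0 by apply/set0P/eqP => X10; apply: not_X12; left.
have -> : X2 = set0.
  by have [//|/set0P X20] := eqVneq X2 set0; exfalso; apply: not_X12; right.
have beta1 d : betaT trans dA d X1 set0 = 1 := betaT_nonempty_empty trans dA_metric d X10.
have -> : [set betaT trans dA d X1 set0 | d in D] = [set 1].
  by apply/seteqP; split => [_ [d _ <-]|_ ->]; [exact: beta1 | exists d0].
by rewrite beta1 /vsup sup1.
Qed.

End Continuity.

Theorem mainTheorem3 (R : realType) (X A : Type) (trans : X -> A -> X -> Prop)
  (dA : A -> A -> R) (HdA : is_metric01 dA) :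
  (forall d : set X -> set X -> R,
     is_dpmet d -> join_pres1 d ->
     (forall X1 : set X, X1 !=set0 -> d X1 set0 = 1) ->
     (forall X1 : set X, X1 !=set0 -> betaT trans dA d X1 set0 = 1) /\
     (forall X1 X2 : set X, (X1 = set0 \/ X2 !=set0) ->
        betaT trans dA d X1 X2 =
        vsup [set vsup [set Num.min (vinf [set dA p.1 b | b in lab Del])
                                    (d [set p.2] (ter (deltaS trans X2 `\` Del)))
                       | Del in [set Del | Del `<=` deltaS trans X2]]
             | p in deltaS trans X1])) /\
  (forall D : set (set X -> set X -> R),
     D !=set0 -> well_ordered_chain D ->
     (forall d, D d -> [/\ is_dpmet d, join_pres1 d &
                         forall X1 : set X, X1 !=set0 -> d X1 set0 = 1]) ->
     betaT trans dA (dsup D) = dsup [set betaT trans dA d | d in D]).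
Proof.
split=> [d d_met dj d_empty|D D0 _ Dd]; last exact: (betaT_dsup trans HdA).
split=> [X1|X1 X2 X12]; first exact: (betaT_nonempty_empty trans HdA).
exact: (betaT_beta_formula trans HdA).
Qed.
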